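(* Let $(\mathcal I,T)$ be of class $\mathcal{DR}$. If its block system is generating, then $(\mathcal I,T)$ is generating.
   Context: Let $\mathcal I=[0,1]$. A binary dynamical system is given by $c\in]0,1[$ and two $C^2$ bijections, $a:[0,1]\to[0,c]$ and $b:[0,1]\to[c,1]$. The map $T$ equals $a^{-1}$ on $]0,c[$ and $b^{-1}$ on $]c,1[$. Class $\mathcal{DR}$: $a$ is increasing, $b$ is decreasing, $a(0)=0$, $a(1)=c$, $b(0)=1$, $b(1)=c$, $a'>0$ and $b'<0$ on $[0,1]$, and $a'(x)<1$, $b'(x)>-1$ for $x\in]0,1]$. The system $(\mathcal I,T)$ is generating if the intervals $h_w(\mathcal I)$, for $w\in\{0,1\}^k$ and $k\ge1$, generate the Borel $\sigma$-algebra of $\mathcal I$. Here $h_0=a$, $h_1=b$, and $h_w=h_{w_1}\circ\cdots\circ h_{w_k}$. With $q(n)=a^n(1)$ and $g_m=a^{m-1}\circ b$ ($m\ge1$), the block system has inverse branches $g_m$. It is generating if the intervals $g_{m_1}\circ\cdots\circ g_{m_n}(\mathcal I)$, for $n\ge1$ and $m_i\ge1$, generate the Borel $\sigma$-algebra. Equivalently, their maximal diameter over all $(m_1,\dots,m_n)$ tends to $0$ as $n\to\infty$. *)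

From HB Require Import structures.
From mathcomp Require Import all_boot all_order all_algebra.
From mathcomp Require Import all_classical all_reals all_analysis.
Set Implicit Arguments. Unset Strict Implicit. Unset Printing Implicit Defensive.
Import Order.TTheory GRing.Theory Num.Theory.
Import numFieldNormedType.Exports.
Local Open Scope classical_set_scope.
Local Open Scope ring_scope.

Section Defs.
Variable R : realType.

(** [f] is C^2 on the closed interval [0,1]: it is (the restriction of) a
    function which is twice differentiable with continuous second derivative
    on an open interval containing [0,1].  Derivatives at the endpoints are
    therefore ordinary (two-sided) derivatives of this extension, which agree
    with the one-sided derivatives of the restriction. *)
Definition C2_on01 (f : R -> R) : Prop :=
  exists e : R, 0 < e /\
    forall x : R, -e < x < 1 + e ->
      [/\ derivable f x 1, derivable (derive1 f) x 1 & {for x, continuous (derive1 (derive1 f))}].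

Definition class_DR (c : R) (a b : R -> R) : Prop :=
  [/\ 0 < c < 1,
      C2_on01 a, C2_on01 b,
      set_bij `[0, 1] `[0, c] a & set_bij `[0, 1] `[c, 1] b]
  /\
  [/\ {in `[0, 1] &, {homo a : x y / x < y}},
      {in `[0, 1] &, {homo b : x y / x < y >-> y < x}},
      [/\ a 0 = 0, a 1 = c, b 0 = 1 & b 1 = c],
      (forall x, x \in `[0, 1] -> 0 < derive1 a x /\ derive1 b x < 0) &
      (forall x, x \in `]0, 1] -> derive1 a x < 1 /\ -1 < derive1 b x)].

(** h_w = h_{w_1} o ... o h_{w_k}, with h_0 = a (false) and h_1 = b (true). *)
Definition hw (a b : R -> R) (w : seq bool) : R -> R :=
  foldr (fun (d : bool) f => (if d then b else a) \o f) id w.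

Definition gm (a b : R -> R) (m : nat) : R -> R := iter m.-1 a \o b.

Definition gms (a b : R -> R) (ms : seq nat) : R -> R :=
  foldr (fun m f => gm a b m \o f) id ms.

Definition borel01 : set (set R) :=
  <<s `[0, 1], [set `[0, 1] `&` O | O in [set O : set R | open O]] >>.

Definition cylinders (a b : R -> R) : set (set R) :=
  [set hw a b w @` `[0, 1] | w in [set w : seq bool | (0 < size w)%N]].

Definition block_cylinders (a b : R -> R) : set (set R) :=
  [set gms a b ms @` `[0, 1] |
     ms in [set ms : seq nat | (0 < size ms)%N /\ all (fun m => 0 < m)%N ms]].

Definition generating (a b : R -> R) : Prop :=
  <<s `[0, 1], cylinders a b >> = borel01.

Definition block_generating (a b : R -> R) : Prop :=
  <<s `[0, 1], block_cylinders a b >> = borel01.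

End Defs.

From HB Require Import structures.
From mathcomp Require Import all_boot all_order all_algebra.
From mathcomp Require Import all_classical all_reals all_analysis.
Set Implicit Arguments. Unset Strict Implicit. Unset Printing Implicit Defensive.
Import Order.TTheory GRing.Theory Num.Theory.
Import numFieldNormedType.Exports.
Local Open Scope classical_set_scope.
Local Open Scope ring_scope.

(* Proof idea: g_m = a^(m-1) o b is h_w for the word w = 0^(m-1) 1, so every
   block interval g_(m_1) o ... o g_(m_n)(I) is an interval h_w(I) of the
   original system. Conversely each h_w(I) is a continuous image of the
   compact interval I, hence closed and Borel. The sigma-algebra generated by
   the h_w(I) therefore lies between the one generated by the block intervals,
   which is Borel by hypothesis, and the Borel sigma-algebra itself. *)

Section Words.
Variables (R : realType) (a b : R -> R).

Lemma hw_cat (u v : seq bool) : hw a b (u ++ v) = hw a b u \o hw a b v.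
Proof. by elim: u => [|d u IH] /=; apply/funext => x //=; rewrite IH. Qed.

Lemma hw_nseq_false (k : nat) : hw a b (nseq k false) = iter k a.
Proof. by elim: k => [|k IH] /=; apply/funext => x //=; rewrite IH. Qed.

Definition block_word (m : nat) : seq bool := rcons (nseq m.-1 false) true.

Lemma gm_hw (m : nat) : gm a b m = hw a b (block_word m).
Proof. by rewrite /block_word -cats1 hw_cat hw_nseq_false. Qed.

Lemma gms_hw (ms : seq nat) : gms a b ms = hw a b (flatten (map block_word ms)).
Proof. by elim: ms => [|m ms IH] //=; rewrite hw_cat -IH -gm_hw. Qed.

Lemma block_cylinders_sub : block_cylinders a b `<=` cylinders a b.
Proof.
move=> _ [ms [ms_gt0 _] <-]; exists (flatten (map block_word ms)).
  by case: ms ms_gt0 => [|m ms] //= _; rewrite size_cat size_rcons.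
by rewrite gms_hw.
Qed.

End Words.

Lemma C2_on01_continuous (R : realType) (f : R -> R) :
  C2_on01 f -> forall x : R, x \in `[0, 1] -> {for x, continuous f}.
Proof.
case=> e [e_gt0 He] x; rewrite in_itv /= => /andP[x_ge0 x_le1].
apply/differentiable_continuous/derivable1_diffP.
have [] // := He x; apply/andP; split.
- by apply: lt_le_trans x_ge0; rewrite oppr_lt0.
- by apply: le_lt_trans x_le1 _; rewrite ltrDl.
Qed.

Lemma closed_sub01_borel (R : realType) (C : set R) :
  closed C -> C `<=` `[0, 1] -> @borel01 R C.
Proof.
move=> C_closed C01.
have -> : C = `[0, 1] `\` (`[0, 1] `&` ~` C).
  apply/seteqP; split => x; first by move=> Cx; split; [exact: C01 | case].
  by move=> [x01 nC]; apply: contrapT => nCx; exact: nC.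
apply: sigma_algebraCD; apply: sub_gen_smallest.
by exists (~` C) => //; exact: closed_openC.
Qed.

Section Cylinders.
Variables (R : realType) (a b : R -> R).
Hypotheses (a01 : set_fun `[0, 1] `[0, 1] a) (b01 : set_fun `[0, 1] `[0, 1] b).
Hypotheses (a_cont : forall x, x \in `[0, 1] -> {for x, continuous a})
           (b_cont : forall x, x \in `[0, 1] -> {for x, continuous b}).

Lemma hw_maps01 (w : seq bool) : set_fun `[0, 1] `[0, 1] (hw a b w).
Proof. by elim: w => [|[] w IH] //= x /IH; [exact: b01 | exact: a01]. Qed.

Lemma hw_continuous (w : seq bool) x :
  x \in `[0, 1] -> {for x, continuous (hw a b w)}.
Proof.
move=> x01; have hw_x01 u : hw a b u x \in `[0, 1].
  exact: (hw_maps01 u x01).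
elim: w => [|[] w IH] /=; first exact: cvg_id.
- by apply: continuous_comp => //; exact/b_cont/hw_x01.
- by apply: continuous_comp => //; exact/a_cont/hw_x01.
Qed.

Lemma cylinders_borel : cylinders a b `<=` @borel01 R.
Proof.
move=> _ [w _ <-]; apply: closed_sub01_borel; last first.
  by move=> _ [x x01 <-]; exact: hw_maps01.
apply: compact_closed; first exact: norm_hausdorff.
apply: continuous_compact; last exact: segment_compact.
by apply: continuous_in_subspaceT => x /set_mem; exact: hw_continuous.
Qed.

End Cylinders.

Theorem proposition3p7 (R : realType) (c : R) (a b : R -> R) :
  class_DR c a b -> block_generating a b -> generating a b.
Proof.
move=> [[/andP[c_gt0 c_lt1] Ca Cb [a_maps _ _] [b_maps _ _]] _] block_gen.
have a01 : set_fun `[0, 1] `[0, 1] a.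
  move=> x /a_maps; rewrite /= !in_itv /= => /andP[-> ax_le].
  exact: le_trans ax_le (ltW c_lt1).
have b01 : set_fun `[0, 1] `[0, 1] b.
  move=> x /b_maps; rewrite /= !in_itv /= => /andP[bx_ge ->].
  by rewrite andbT; exact: le_trans (ltW c_gt0) bx_ge.
apply/seteqP; split.
- apply: smallest_sub; first exact: smallest_sigma_algebra.
  exact: cylinders_borel (C2_on01_continuous Ca) (C2_on01_continuous Cb).
- rewrite -block_gen; apply: smallest_sub; first exact: smallest_sigma_algebra.
  by move=> A /block_cylinders_sub; exact: sub_gen_smallest.
Qed.
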